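(* Let $\mathfrak{P}$ be a nonempty compact set of probability distributions $P=(p_\omega)_{\omega\in\Omega}$ on $\Omega$ and $\Phi_R(\mathbf{x})=\min_{P\in\mathfrak{P}}\sum_{\omega\in\Omega}p_\omega Q_\omega(\mathbf{x})$. Let $\hat{\mathbf{x}}\in\mathcal{X}$ and for each $\omega\in\Omega$ let $\hat{\mathbf{S}}^\omega$ be an optimal solution of the problem defining $Q_\omega(\hat{\mathbf{x}})$; set $\hat y^\omega_{q,i}=1$ if $i\in\hat S^\omega_q$ and $\hat y^\omega_{q,i}=0$ otherwise. Then for every $\mathbf{x}\in\mathcal{X}$, $$\Phi_R(\mathbf{x})\;\ge\;\Phi_R(\hat{\mathbf{x}})-\sum_{q=1}^k\sum_{i\in N}\Big(\max_{P\in\mathfrak{P}}\sum_{\omega\in\Omega}p_\omega\,\rho^\omega_{q,i}(\boldsymbol{\emptyset})\,\hat y^\omega_{q,i}\,\xi^\omega_i\Big)x_{q,i}.$$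
   Context: Let $n,k$ be positive integers and $N=\{1,\dots,n\}$. $\mathbb{X}(N,k)$ denotes the set of $k$-tuples $\mathbf{S}=(S_1,\dots,S_k)$ of pairwise disjoint subsets of $N$; such a tuple is identified with $\mathbf{s}\in\{0,1\}^{kn}$ where $s_{q,i}=1$ iff $i\in S_q$. For $\mathbf{X},\mathbf{Y}\in\mathbb{X}(N,k)$ let $\mathbf{X}\sqcap\mathbf{Y}=(X_1\cap Y_1,\dots,X_k\cap Y_k)$ and $\mathbf{X}\sqcup\mathbf{Y}$ be the tuple whose $i$-th component is $(X_i\cup Y_i)\setminus\bigcup_{q\ne i}(X_q\cup Y_q)$. A function $f:\mathbb{X}(N,k)\to\mathbb{R}$ is $k$-submodular if $f(\mathbf{X})+f(\mathbf{Y})\ge f(\mathbf{X}\sqcap\mathbf{Y})+f(\mathbf{X}\sqcup\mathbf{Y})$ for all $\mathbf{X},\mathbf{Y}$, and monotone if $f(\mathbf{X})\le f(\mathbf{Y})$ whenever $X_q\subseteq Y_q$ for all $q$. $\boldsymbol{\emptyset}=(\emptyset,\dots,\emptyset)$. Given nonnegative integer budgets $A_1,\dots,A_k$ and $D_1,\dots,D_k$, the attacker's feasible set is $\mathcal{X}=\{\mathbf{x}\in\{0,1\}^{kn}:\sum_{i=1}^n x_{q,i}\le A_q\ \forall q,\ \sum_{q=1}^k x_{q,i}\le 1\ \forall i\in N\}$. Stochastic setting: $\Omega$ is a finite set of scenarios; for each $\omega\in\Omega$ we are given $\xi^\omega\in\{0,1\}^n$ and a monotone $k$-submodular function $f^\omega:\mathbb{X}(N,k)\to\mathbb{R}$,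 with marginal gains $\rho^\omega_{q,i}(\mathbf{X})=f^\omega(X_1,\dots,X_q\cup\{i\},\dots,X_k)-f^\omega(\mathbf{X})$ for $i\notin\bigcup_r X_r$. For $\mathbf{x}\in\mathcal{X}$, $Q_\omega(\mathbf{x})=\max\{f^\omega(\mathbf{S}):\mathbf{S}\in\mathbb{X}(N,k),\ s_{q,i}\le 1-x_{q,i}\xi^\omega_i\ \forall q,i,\ \sum_{i=1}^n s_{q,i}\le D_q\ \forall q\}$. *)

From HB Require Import structures.
From mathcomp Require Import all_boot all_order all_algebra.
From mathcomp Require Import all_classical all_reals all_analysis.
Set Implicit Arguments. Unset Strict Implicit. Unset Printing Implicit Defensive.
Import Order.TTheory GRing.Theory Num.Theory.
Local Open Scope ring_scope.

Definition ktuple (n k : nat) := {ffun 'I_k -> {set 'I_n}}.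

Definition pdisj n k (X : ktuple n k) : Prop :=
  forall q r : 'I_k, q != r -> (X q :&: X r == finset.set0).

Definition kmeet n k (X Y : ktuple n k) : ktuple n k :=
  [ffun q => X q :&: Y q].

Definition kjoin n k (X Y : ktuple n k) : ktuple n k :=
  [ffun q => (X q :|: Y q) :\: \bigcup_(r | r != q) (X r :|: Y r)].

Definition kempty n k : ktuple n k := [ffun => finset.set0].

Definition k_submodular (R : realType) n k (f : ktuple n k -> R) : Prop :=
  forall X Y, pdisj X -> pdisj Y ->
    f (kmeet X Y) + f (kjoin X Y) <= f X + f Y.

Definition k_monotone (R : realType) n k (f : ktuple n k -> R) : Prop :=
  forall X Y, pdisj X -> pdisj Y -> (forall q, X q \subset Y q) -> f X <= f Y.

Definition rho (R : realType) n k (f : ktuple n k -> R) (X : ktuple n k)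
  (q : 'I_k) (i : 'I_n) : R :=
  f [ffun r => if r == q then i |: X r else X r] - f X.

Definition attacker_feasible n k (A : 'I_k -> nat) (x : 'I_k -> 'I_n -> bool) : Prop :=
  (forall q, (\sum_(i < n) x q i <= A q)%N) /\
  (forall i, (\sum_(q < k) x q i <= 1)%N).

Definition defender_feasible n k (D : 'I_k -> nat) (xi : 'I_n -> bool)
  (x : 'I_k -> 'I_n -> bool) (S : ktuple n k) : bool :=
  [forall q, [forall q', (q != q') ==> (S q :&: S q' == finset.set0)]] &&
  [forall q, [forall i, (i \in S q) ==> ~~ (x q i && xi i)]] &&
  [forall q, (#|S q| <= D q)%N].

(* Q_omega(x): maximum of f over the defender feasible set (which always
   contains the empty tuple, so the max starting from f(empty) is the max) *)
Definition Qval (R : realType) n k (D : 'I_k -> nat) (xi : 'I_n -> bool)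
  (f : ktuple n k -> R) (x : 'I_k -> 'I_n -> bool) : R :=
  \big[Num.max/f (kempty n k)]_(S : ktuple n k | defender_feasible D xi x S) f S.

Definition is_distribution (R : realType) (Omega : finType) (P : Omega -> R) : Prop :=
  (forall w, 0 <= P w) /\ \sum_(w : Omega) P w = 1.

Local Open Scope classical_set_scope.

(* Phi_R(x) = min_{P in frakP} sum_w p_w Q_w(x)  (min realized as inf;
   it is attained since frakP is compact and nonempty) *)
Definition PhiR (R : realType) n k (Omega : finType) (frakP : set (Omega -> R))
  (D : 'I_k -> nat) (xi : Omega -> 'I_n -> bool) (f : Omega -> ktuple n k -> R)
  (x : 'I_k -> 'I_n -> bool) : R :=
  inf [set (\sum_(w : Omega) P w * Qval D (xi w) (f w) x) | P in frakP].

From HB Require Import structures.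
From mathcomp Require Import all_boot all_order all_algebra.
From mathcomp Require Import all_classical all_reals all_analysis.
From mathcomp Require Import lra.
Import numFieldNormedType.Exports.
Import Order.TTheory GRing.Theory Num.Theory.
Local Open Scope ring_scope.
Local Open Scope classical_set_scope.
Set Implicit Arguments. Unset Strict Implicit. Unset Printing Implicit Defensive.

(* By k-submodularity, the marginal gain rho_{q,i}(T) of a pairwise disjoint
   tuple T never exceeds rho_{q,i}(empty).  Against an interdiction x, the
   defender may keep the part of the optimal response Shat^w not blocked by x;
   adding the removed pairs back one at a time shows that this loses at most
   the sum of rho^w_{q,i}(empty) over the blocked pairs, so
   Q_w(xhat) - loss_w(x) <= Q_w(x).  Averaging over any P in frakP and bounding
   each coefficient by its sup over frakP gives the claim; inf and sup are
   over bounded sets because the weights are probabilities. *)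

Section KSubmodular.
Variables (R : realType) (n k : nat).
Implicit Types (T X Y : ktuple n k) (f : ktuple n k -> R).

Definition kinsert T (q : 'I_k) (i : 'I_n) : ktuple n k :=
  [ffun r => if r == q then i |: T r else T r].

Lemma rhoE f T q i : rho f T q i = f (kinsert T q i) - f T.
Proof. by []. Qed.

Lemma pdisj_kempty : pdisj (kempty n k).
Proof. by move=> q r _; rewrite !ffunE finset.setI0. Qed.

Lemma pdisj_sub X Y : pdisj Y -> (forall q, X q \subset Y q) -> pdisj X.
Proof.
move=> hY hXY q r qr; rewrite -finset.subset0 -(eqP (hY q r qr)).
exact: finset.setISS.
Qed.

Lemma mem_kinsert T q i r j :
  (j \in kinsert T q i r) = (r == q) && (j == i) || (j \in T r).
Proof. by rewrite ffunE; case: eqP; rewrite ?inE. Qed.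

Lemma pdisj_kinsert T q i :
  pdisj T -> (forall r, r != q -> i \notin T r) -> pdisj (kinsert T q i).
Proof.
move=> hT hi r s rs; apply/eqP/setP=> j; rewrite !inE !mem_kinsert.
have [->|nji] := eqVneq j i; rewrite ?andbT ?andbF /=.
  have [erq|/hi/negbTE->] := eqVneq r q => //.
  have [esq|/hi/negbTE->] := eqVneq s q => //.
  by rewrite erq esq eqxx in rs.
by move: (hT r s rs) => /eqP/setP/(_ j); rewrite !inE.
Qed.

Lemma kmeet_kinsert_kempty T q i :
  (forall r, i \notin T r) -> kmeet (kinsert (kempty n k) q i) T = kempty n k.
Proof.
move=> hi; apply/ffunP=> r; apply/setP=> j.
rewrite [kmeet _ _ _]ffunE [kempty _ _ _]ffunE !inE mem_kinsert ffunE inE orbF.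
by apply/negP => /andP[/andP[_ /eqP->]]; apply/negP.
Qed.

Lemma kjoin_kinsert_kempty T q i : pdisj T -> (forall r, i \notin T r) ->
  kjoin (kinsert (kempty n k) q i) T = kinsert T q i.
Proof.
move=> hT hi; apply/ffunP=> r; apply/setP=> j.
rewrite [kjoin _ _ _]ffunE !inE !mem_kinsert ffunE inE orbF.
apply/andP/idP => [[_ //]|jr]; split=> //; apply/bigcupP => -[s sr].
rewrite inE mem_kinsert ffunE inE orbF.
case/orP: jr => [/andP[/eqP<- /eqP->]|jr].
  by rewrite (negbTE sr) (negbTE (hi s)).
case/orP => [/andP[_ /eqP ji]|js]; first by rewrite ji (negbTE (hi r)) in jr.
by move: (hT s r sr) => /eqP/setP/(_ j); rewrite !inE js jr.
Qed.

Lemma rho_le_rho_kempty f T q i : k_submodular f -> pdisj T ->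
  (forall r, i \notin T r) -> rho f T q i <= rho f (kempty n k) q i.
Proof.
move=> hf hT hi; have hX : pdisj (kinsert (kempty n k) q i).
  by apply: pdisj_kinsert pdisj_kempty _ => r _; rewrite ffunE inE.
have := hf _ _ hX hT; rewrite kmeet_kinsert_kempty // kjoin_kinsert_kempty //.
by rewrite !rhoE; lra.
Qed.

Definition kgap Y T : {set 'I_k * 'I_n} :=
  [set p | (p.2 \in Y p.1) && (p.2 \notin T p.1)].

Lemma kgap_kinsert Y T q i : kgap Y (kinsert T q i) = kgap Y T :\ (q, i).
Proof.
apply/setP=> -[r j]; rewrite !inE mem_kinsert xpair_eqE negb_or /=.
by rewrite andbCA.
Qed.

Lemma kinsert_sub Y T q i : (forall r, T r \subset Y r) -> i \in Y q ->
  forall r, kinsert T q i r \subset Y r.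
Proof.
move=> hTY iY r; apply/fintype.subsetP=> j; rewrite mem_kinsert.
by case/orP => [/andP[/eqP-> /eqP->] //|]; exact: (fintype.subsetP (hTY r)).
Qed.

Lemma kgap_eq0 Y T :
  (forall r, T r \subset Y r) -> kgap Y T = finset.set0 -> T = Y.
Proof.
move=> hTY gap0; apply/ffunP=> r; apply/eqP; rewrite finset.eqEsubset hTY /=.
apply/fintype.subsetP=> j jY; move/setP: gap0 => /(_ (r, j)).
by rewrite !inE jY => /negbFE.
Qed.

Lemma sub_le_sum_rho_kgap f Y T : k_submodular f -> pdisj Y ->
  (forall r, T r \subset Y r) ->
  f Y - f T <= \sum_(p in kgap Y T) rho f (kempty n k) p.1 p.2.
Proof.
move=> hf hY; have [m] := ubnP #|kgap Y T|; elim: m T => // m IH T hm hTY.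
have [gap0|[[q i] pg]] := finset.set_0Vmem (kgap Y T).
  by rewrite gap0 big_set0 (kgap_eq0 hTY gap0) subrr.
have /andP[/= iY iT] : (i \in Y q) && (i \notin T q) by move: pg; rewrite inE.
have hi r : i \notin T r.
  have [->//|rq] := eqVneq r q; apply/negP => iTr.
  move: (hY r q rq) => /eqP/setP/(_ i).
  by rewrite !inE iY (fintype.subsetP (hTY r) _ iTr).
have lt_gap : (#|kgap Y (kinsert T q i)| < m)%N.
  by move: hm; rewrite kgap_kinsert (cardsD1 (q, i)) pg.
have := IH _ lt_gap (kinsert_sub hTY iY).
have := rho_le_rho_kempty q hf (pdisj_sub hY hTY) hi.
rewrite (big_setD1 _ pg) /= -kgap_kinsert rhoE; lra.
Qed.

Section Defender.
Variables (D : 'I_k -> nat) (xi : 'I_n -> bool) (f : ktuple n k -> R).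
Implicit Types (x : 'I_k -> 'I_n -> bool) (S : ktuple n k).

Lemma defender_feasible_kempty x : defender_feasible D xi x (kempty n k).
Proof.
rewrite /defender_feasible -andbA; apply/and3P; split; apply/forallP=> q.
- by apply/forallP=> r; rewrite !ffunE finset.set0I eqxx implybT.
- by apply/forallP=> i; rewrite ffunE inE.
- by rewrite ffunE finset.cards0.
Qed.


Lemma defender_feasible_pdisj x S : defender_feasible D xi x S -> pdisj S.
Proof.
rewrite /defender_feasible -andbA => /and3P[/forallP hS _ _] q r qr.
by move/forallP: (hS q) => /(_ r); rewrite qr.
Qed.

Lemma le_Qval x S : defender_feasible D xi x S -> f S <= Qval D xi f x.
Proof. by move=> hS; rewrite /Qval (bigD1 S) //= le_max lexx. Qed.

Lemma Qval_le x c :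
  (forall S, defender_feasible D xi x S -> f S <= c) -> Qval D xi f x <= c.
Proof.
move=> hc; rewrite /Qval; elim/big_rec: _ => [|S r hS hr].
  exact/hc/defender_feasible_kempty.
by rewrite ge_max hr hc.
Qed.

Definition survivors x S : ktuple n k :=
  [ffun q => [set j in S q | ~~ (x q j && xi j)]].

Lemma survivors_sub x S q : survivors x S q \subset S q.
Proof. by apply/fintype.subsetP=> j; rewrite ffunE inE => /andP[]. Qed.

Lemma defender_feasible_survivors xhat x S :
  defender_feasible D xi xhat S -> defender_feasible D xi x (survivors x S).
Proof.
move=> hS; have := defender_feasible_pdisj hS.
move: hS; rewrite /defender_feasible -!andbA => /and3P[_ _ /forallP hc] hS.
apply/and3P; split; apply/forallP=> q.
- apply/forallP=> r; apply/implyP=> qr.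
  exact: pdisj_sub hS (survivors_sub x S) q r qr.
- by apply/forallP=> j; apply/implyP; rewrite ffunE inE => /andP[].
- exact: leq_trans (subset_leq_card (survivors_sub x S q)) (hc q).
Qed.

Lemma kgap_survivors x S :
  kgap S (survivors x S) = [set p | [&& p.2 \in S p.1, x p.1 p.2 & xi p.2]]%SET.
Proof.
apply/setP=> -[q i]; rewrite !inE ffunE inE /=.
by case: (i \in S q); rewrite /= ?negbK.
Qed.

Lemma sum_rho_kgap_survivors x S :
  \sum_(p in kgap S (survivors x S)) rho f (kempty n k) p.1 p.2 =
  \sum_(q < k) \sum_(i < n)
    rho f (kempty n k) q i * (i \in S q)%:R * (xi i)%:R * (x q i)%:R.
Proof.
rewrite kgap_survivors pair_big big_mkcond /=; apply: eq_bigr => -[q i] _.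
by rewrite inE /=; case: (i \in S q); case: (x q i); case: (xi i);
  rewrite ?mulr1 ?mulr0.
Qed.

Lemma Qval_sub_sum_rho_le_Qval xhat x Sh : k_submodular f ->
  defender_feasible D xi xhat Sh ->
  (forall S, defender_feasible D xi xhat S -> f S <= f Sh) ->
  Qval D xi f xhat - \sum_(q < k) \sum_(i < n)
    rho f (kempty n k) q i * (i \in Sh q)%:R * (xi i)%:R * (x q i)%:R
  <= Qval D xi f x.
Proof.
move=> hf hSh hopt; rewrite -sum_rho_kgap_survivors.
have := sub_le_sum_rho_kgap hf (defender_feasible_pdisj hSh) (survivors_sub x Sh).
have := Qval_le hopt; have := le_Qval (defender_feasible_survivors x hSh).
lra.
Qed.

End Defender.

End KSubmodular.

Section Expectation.
Variables (R : realType) (Omega : finType) (frakP : set (Omega -> R)).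
Hypothesis frakP_distribution : forall P, frakP P -> is_distribution P.
Implicit Types (P g : Omega -> R).

Lemma norm_expectation_le P g :
  is_distribution P -> `|\sum_w P w * g w| <= \sum_w `|g w|.
Proof.
case=> P_ge0 P_sum1; apply: le_trans (ler_norm_sum _ _ _) (ler_sum _ _) => w _.
have P_le1 : P w <= 1 by rewrite -P_sum1 (bigD1 w) //= lerDl sumr_ge0.
by rewrite normrM ger0_norm // ler_piMl.
Qed.

Lemma inf_expectation_le g P :
  frakP P -> inf [set \sum_w P w * g w | P in frakP] <= \sum_w P w * g w.
Proof.
move=> hP; apply: ge_inf; last by exists P.
exists (- \sum_w `|g w|) => _ [P' hP' <-].
by have := norm_expectation_le g (frakP_distribution hP'); rewrite ler_norml => /andP[].
Qed.

Lemma expectation_le_sup g P :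
  frakP P -> \sum_w P w * g w <= sup [set \sum_w P w * g w | P in frakP].
Proof.
move=> hP; apply: sup_upper_bound; last by exists P.
split; first by exists (\sum_w P w * g w), P.
exists (\sum_w `|g w|) => _ [P' hP' <-].
by have := norm_expectation_le g (frakP_distribution hP'); rewrite ler_norml => /andP[].
Qed.

Lemma expectation_double_sum (I J : finType) P (F : I -> J -> Omega -> R)
    (a : I -> J -> R) :
  \sum_w P w * (\sum_i \sum_j F i j w * a i j)
  = \sum_i \sum_j (\sum_w P w * F i j w) * a i j.
Proof.
under eq_bigr do rewrite mulr_sumr; rewrite exchange_big; apply: eq_bigr => i _.
under eq_bigr do rewrite mulr_sumr; rewrite exchange_big; apply: eq_bigr => j _.
by rewrite mulr_suml; apply: eq_bigr => w _; rewrite mulrA.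
Qed.

Lemma inf_expectation_sub_le (a b c : Omega -> R) (s : R) : frakP !=set0 ->
  (forall w, a w - c w <= b w) ->
  (forall P, frakP P -> \sum_w P w * c w <= s) ->
  inf [set \sum_w P w * a w | P in frakP] - s
  <= inf [set \sum_w P w * b w | P in frakP].
Proof.
move=> [P0 hP0] abc hs; apply: lb_le_inf; first by exists (\sum_w P0 w * b w), P0.
move=> _ [P hP <-]; have [P_ge0 _] := frakP_distribution hP.
have : \sum_w P w * a w - \sum_w P w * c w <= \sum_w P w * b w.
  rewrite -sumrB; apply: ler_sum => w _; rewrite -mulrBr.
  by apply: ler_wpM2l; [exact: P_ge0 | exact: abc].
have := hs P hP; have := inf_expectation_le a hP; lra.
Qed.

End Expectation.

Theorem theorem4 (R : realType) (n k : nat) (Omega : finType)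
  (xi : Omega -> 'I_n -> bool) (f : Omega -> ktuple n k -> R)
  (A D : 'I_k -> nat) (frakP : set (Omega -> R))
  (hf : forall w, k_monotone (f w) /\ k_submodular (f w))
  (hP0 : frakP !=set0) (hPc : @compact {ptws Omega -> R} frakP)
  (hPd : forall P, frakP P -> is_distribution P)
  (xhat : 'I_k -> 'I_n -> bool) (hxhat : attacker_feasible A xhat)
  (Shat : Omega -> ktuple n k)
  (hShat : forall w, defender_feasible D (xi w) xhat (Shat w) /\
     (forall S, defender_feasible D (xi w) xhat S -> f w S <= f w (Shat w)))
  (x : 'I_k -> 'I_n -> bool) (hx : attacker_feasible A x) :
  let yhat w q i := (i \in Shat w q) in
  PhiR frakP D xi f xhat
  - \sum_(q < k) \sum_(i < n)
      (sup [set (\sum_(w : Omega) P w * rho (f w) (kempty n k) q i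
                   * (yhat w q i)%:R * (xi w i)%:R) | P in frakP]) * (x q i)%:R
  <= PhiR frakP D xi f x.
Proof.
cbv zeta; rewrite /PhiR.
pose g q i w := rho (f w) (kempty n k) q i * (i \in Shat w q)%:R * (xi w i)%:R.
apply: (inf_expectation_sub_le hPd hP0
  (c := fun w => \sum_(q < k) \sum_(i < n) g q i w * (x q i)%:R)).
  by move=> w; have [feas opt] := hShat w;
    exact: Qval_sub_sum_rho_le_Qval (proj2 (hf w)) feas opt.
move=> P hP; rewrite expectation_double_sum.
apply: ler_sum => q _; apply: ler_sum => i _; apply: ler_wpM2r; first exact: ler0n.
have -> : [set \sum_w P w * rho (f w) (kempty n k) q i
    * (i \in Shat w q)%:R * (xi w i)%:R | P in frakP]
    = [set \sum_w P w * g q i w | P in frakP].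
  by apply: eq_imagel => P' _; apply: eq_bigr => w _; rewrite !mulrA.
exact: expectation_le_sup.
Qed.
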